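(* Let $\mathcal D$ consist of $n$ i.i.d. triples $(x,a,y)$ with $x\sim d_0$, $a$ uniform on $\mathcal A$, $y$ the feedback, and let $\widehat V_{\mathcal D}(\pi,\psi)=\frac1n\sum_{\mathcal D}K\psi(y)\pi(a|x)$, $\widehat V_{\mathcal D}(\pi_u,\psi)=\frac1n\sum_{\mathcal D}\psi(y)$, and $(\hat\pi_{\mathcal D},\hat\psi_{\mathcal D})\in\arg\max_{(\pi,\psi)\in\Pi\times\Psi}\widehat V_{\mathcal D}(\pi,\psi)-\widehat V_{\mathcal D}(\pi_u,\psi)$. Assume Assumption 1 and that for some $\varepsilon_{\mathcal D}\ge0$ the uniform deviation bound $|(\widehat V_{\mathcal D}(\pi,\psi)-\widehat V_{\mathcal D}(\pi_u,\psi))-(V(\pi,\psi)-V(\pi_u,\psi))|\le K\varepsilon_{\mathcal D}$ holds for all $(\pi,\psi)\in\Pi\times\Psi$ (with $\varepsilon_{\mathcal D}=\sqrt{\iota/(2n)}$, $\iota\ge\log\frac{2|\Pi||\Psi|}{\delta}$, this holds with probability at least $1-\delta$). If $$\widehat V_{\mathcal D}(\hat\pi_{\mathcal D},\hat\psi_{\mathcal D})-\widehat V_{\mathcal D}(\pi_u,\hat\psi_{\mathcal D})>V(\pi_u)+K\varepsilon_{\mathcal D},$$ then $V(\hat\pi_{\mathcal D})\ge V(\pi^\star)-\frac{2K\varepsilon_{\mathcal D}}{\Delta\psi^\star}$.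
   Context: IGL setting: contexts $x\sim d_0$, finite action set $\mathcal A$ with $|\mathcal A|=K$, latent reward $r\in\{0,1\}$ and feedback $y\in\mathcal Y$ drawn given $(x,a)$; $R(x,a)=\mathbb E[r|x,a]$, $V(\pi)=\mathbb E_{x\sim d_0,a\sim\pi(\cdot|x)}[R(x,a)]$, $V(\pi,\psi)=\mathbb E_{x\sim d_0,a\sim\pi(\cdot|x)}[\psi(y)]$ for decoders $\psi:\mathcal Y\to[0,1]$. $\Pi$, $\Psi$ finite classes. Assumption 1: there are distributions $Q_0,Q_1$ on $\mathcal Y$ with $y\mid(x,a,r)\sim Q_r$; $\Delta\psi:=\mathbb E_{Q_1}[\psi]-\mathbb E_{Q_0}[\psi]$. $\pi_u$ uniform policy. $\pi^\star\in\arg\max_{\pi\in\Pi}V(\pi)$, $\psi^\star\in\arg\max_{\psi\in\Psi}\Delta\psi$, $\Delta\psi^\star=\Delta(\psi^\star)$. *)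

From HB Require Import structures.
From mathcomp Require Import all_boot all_order all_algebra.
From mathcomp Require Import all_classical all_reals all_analysis.
Set Implicit Arguments. Unset Strict Implicit. Unset Printing Implicit Defensive.
Import Order.TTheory GRing.Theory Num.Theory.
Import numFieldNormedType.Exports.
Local Open Scope classical_set_scope.
Local Open Scope ring_scope.

Definition Kr (R : realType) (A : finType) : R := (#|A|)%:R.

Section IGL.
Context {R : realType} {dX : measure_display} {X : measurableType dX}
        {A : finType} {dY : measure_display} {Y : measurableType dY}.


Definition is_policy (pi : X -> A -> R) : Prop :=
  (forall x a, 0 <= pi x a) /\ (forall x, \sum_(a : A) pi x a = 1) /\
  (forall a, measurable_fun setT (fun x => pi x a)).

Definition is_decoder (psi : Y -> R) : Prop :=
  (forall y, 0 <= psi y <= 1) /\ measurable_fun setT psi.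

(* R(x,a) = E[r | x,a] in [0,1] *)
Definition is_reward_fun (Rf : X -> A -> R) : Prop :=
  (forall x a, 0 <= Rf x a <= 1) /\
  (forall a, measurable_fun setT (fun x => Rf x a)).

Definition pi_u : X -> A -> R := fun _ _ => (Kr R A)^-1.

Definition EQ (Q : probability Y R) (psi : Y -> R) : R :=
  \int[Q]_(y in setT) psi y.

Definition Delta (Q0 Q1 : probability Y R) (psi : Y -> R) : R :=
  EQ Q1 psi - EQ Q0 psi.

Definition Vpi (d0 : probability X R) (Rf : X -> A -> R) (pi : X -> A -> R) : R :=
  \int[d0]_(x in setT) (\sum_(a : A) pi x a * Rf x a).

(* Under Assumption 1 (y | x,a,r ~ Q_r, r | x,a ~ Bernoulli(R(x,a))),
   E[psi(y) | x,a] = R(x,a) E_{Q1}[psi] + (1 - R(x,a)) E_{Q0}[psi]. *)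
Definition cond_Epsi (Q0 Q1 : probability Y R) (Rf : X -> A -> R)
    (psi : Y -> R) (x : X) (a : A) : R :=
  Rf x a * EQ Q1 psi + (1 - Rf x a) * EQ Q0 psi.

(* V(pi,psi) = E_{x ~ d0, a ~ pi(.|x)} [psi(y)] *)
Definition Vpsi (d0 : probability X R) (Q0 Q1 : probability Y R)
    (Rf : X -> A -> R) (pi : X -> A -> R) (psi : Y -> R) : R :=
  \int[d0]_(x in setT) (\sum_(a : A) pi x a * cond_Epsi Q0 Q1 Rf psi x a).

Definition Vhat (D : seq (X * A * Y)) (pi : X -> A -> R) (psi : Y -> R) : R :=
  (size D)%:R^-1 * \sum_(t <- D) Kr R A * psi t.2 * pi t.1.1 t.1.2.

Definition Vhat_u (D : seq (X * A * Y)) (psi : Y -> R) : R :=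
  (size D)%:R^-1 * \sum_(t <- D) psi t.2.

End IGL.

From HB Require Import structures.
From mathcomp Require Import all_boot all_order all_algebra.
From mathcomp Require Import all_classical all_reals all_analysis.
From mathcomp Require Import ring lra.
Set Implicit Arguments. Unset Strict Implicit. Unset Printing Implicit Defensive.
Import Order.TTheory GRing.Theory Num.Theory.
Local Open Scope ring_scope.

(* The argument has a probabilistic part and a purely arithmetic part.
   1. Under Assumption 1, E[psi(y) | x, a] is affine in R(x, a), so
      V(pi, psi) = E_{Q0}[psi] + Delta psi * V(pi); hence the population
      objective V(pi, psi) - V(pi_u, psi) equals Delta psi * (V(pi) - V(pi_u))
      ([Vpsi_affine], [objective_factor]).  This needs integrability of bounded measurable
      functions and the bounds 0 <= V(pi) and 0 <= E_Q[psi] <= 1.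
   2. With this identity the theorem is a statement about real numbers
      ([excess_value_bound]): the empirical maximiser exceeds V(pi_u) + K eps,
      so its population objective exceeds V(pi_u); since Delta psihat >= -1 this
      forces Delta psihat > 0 and V(pihat) > V(pi_u) ([positive_signal]).  Then
      comparing with (pi^star, psi^star) through the deviation bound and
      Delta psihat <= Delta psi^star gives
      Delta psi^star (V(pi^star) - V(pihat)) <= 2 K eps. *)

Section BoundedIntegrals.
Local Open Scope classical_set_scope.
Context {R : realType} {dT : measure_display} {T : measurableType dT}.
Variable P : probability T R.

Lemma bounded_integrable {f : T -> R} {M : R} :
  measurable_fun setT f -> (forall x, `|f x| <= M) ->
  P.-integrable setT (EFin \o f).
Proof.
move=> mf fM; apply: measurable_bounded_integrable => //.
  by rewrite ltey_eq fin_num_measure.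
exists M; split; first by rewrite num_real.
by move=> N MN x _ /=; apply: le_trans (fM x) (ltW MN).
Qed.

Lemma unit_valued_integrable (f : T -> R) :
  measurable_fun setT f -> (forall x, 0 <= f x <= 1) ->
  P.-integrable setT (EFin \o f).
Proof.
move=> mf f01; apply: (bounded_integrable (M := 1)) => // x.
by have /andP[f0 f1] := f01 x; rewrite ger0_norm.
Qed.

Lemma Rintegral_prob_cst (c : R) : \int[P]_(x in setT) c = c.
Proof.
rewrite Rintegral_cst // (_ : fine _ = 1) ?mulr1 //.
exact: (congr1 fine (probability_setT P)).
Qed.

Lemma Rintegral_unit_interval (f : T -> R) :
  measurable_fun setT f -> (forall x, 0 <= f x <= 1) ->
  0 <= \int[P]_(x in setT) f x <= 1.
Proof.
move=> mf f01; apply/andP; split.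
  by apply: Rintegral_ge0 => x _; case/andP: (f01 x).
rewrite -[leRHS](Rintegral_prob_cst 1).
apply: le_Rintegral => //; first exact: unit_valued_integrable.
- by apply: unit_valued_integrable => // x; rewrite lexx ler01.
- by move=> x _; case/andP: (f01 x).
Qed.

End BoundedIntegrals.

Section PopulationValues.
Local Open Scope classical_set_scope.
Context {R : realType} {dX : measure_display} {X : measurableType dX}
        {A : finType} {dY : measure_display} {Y : measurableType dY}.

Lemma EQ_unit_interval (Q : probability Y R) (psi : Y -> R) :
  is_decoder psi -> 0 <= EQ Q psi <= 1.
Proof. by case=> psi01 mpsi; apply: Rintegral_unit_interval. Qed.

Lemma Delta_ge_m1 (Q0 Q1 : probability Y R) (psi : Y -> R) :
  is_decoder psi -> -1 <= Delta Q0 Q1 psi.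
Proof.
move=> hpsi; have /andP[E10 _] := EQ_unit_interval Q1 hpsi.
have /andP[_ E01] := EQ_unit_interval Q0 hpsi.
by rewrite /Delta; lra.
Qed.

Lemma policy_reward_unit (pi Rf : X -> A -> R) :
  is_reward_fun Rf -> is_policy pi ->
  measurable_fun setT (fun x => \sum_(a : A) pi x a * Rf x a) /\
  forall x, 0 <= \sum_(a : A) pi x a * Rf x a <= 1.
Proof.
case=> Rf01 mRf [pi0 [pi1 mpi]]; split.
  by apply: measurable_sum => a; apply: measurable_realfun.measurable_funM.
move=> x; apply/andP; split.
  by apply: sumr_ge0 => a _; apply: mulr_ge0 => //; case/andP: (Rf01 x a).
rewrite -(pi1 x); apply: ler_sum => a _.
by have := pi0 x a; case/andP: (Rf01 x a) => ? ? ?; nra.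
Qed.

Lemma Vpi_ge0 (d0 : probability X R) (pi Rf : X -> A -> R) :
  is_reward_fun Rf -> is_policy pi -> 0 <= Vpi d0 Rf pi.
Proof.
move=> hR hpi; apply: Rintegral_ge0 => x _.
by case: (policy_reward_unit hR hpi) => _ /(_ x) /andP[].
Qed.

Lemma Vpsi_affine (d0 : probability X R) (Q0 Q1 : probability Y R)
    (Rf pi : X -> A -> R) (psi : Y -> R) :
  is_reward_fun Rf -> is_policy pi ->
  Vpsi d0 Q0 Q1 Rf pi psi = EQ Q0 psi + Delta Q0 Q1 psi * Vpi d0 Rf pi.
Proof.
move=> hR hpi; have [mf f01] := policy_reward_unit hR hpi.
have [_ [pi1 _]] := hpi.
rewrite /Vpsi /Vpi.
transitivity (\int[d0]_(x in setT)
   (EQ Q0 psi + Delta Q0 Q1 psi * (\sum_(a : A) pi x a * Rf x a))).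
  apply: eq_Rintegral => x _; symmetry.
  rewrite mulr_sumr -[X in X + _]mulr1 -(pi1 x) mulr_sumr -big_split /=.
  by apply: eq_bigr => a _; rewrite /cond_Epsi /Delta; ring.
rewrite RintegralD //.
- by rewrite Rintegral_prob_cst RintegralZl //; exact: unit_valued_integrable.
- by apply: (@bounded_integrable _ _ _ d0 _ `|EQ Q0 psi|) => //; exact: measurable_cst.
- apply: (@bounded_integrable _ _ _ d0 _ `|Delta Q0 Q1 psi|).
    by apply: measurable_realfun.measurable_funM => //; exact: measurable_cst.
  move=> x; rewrite normrM ler_piMr //.
  by case/andP: (f01 x) => ? ?; rewrite ger0_norm.
Qed.

Lemma pi_u_policy : (0 < #|A|)%N -> is_policy (@pi_u R dX X A).
Proof.
move=> hA; rewrite /pi_u /Kr; split; [|split].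
- by move=> x a; rewrite invr_ge0 ler0n.
- move=> x; rewrite sumr_const -[#|xpredT|]/#|A| -(mulr_natr (_^-1)).
  by rewrite mulVf // pnatr_eq0 -lt0n.
- by move=> a; exact: measurable_cst.
Qed.

Lemma objective_factor (d0 : probability X R) (Q0 Q1 : probability Y R)
    (Rf pi : X -> A -> R) (psi : Y -> R) :
  (0 < #|A|)%N -> is_reward_fun Rf -> is_policy pi ->
  Vpsi d0 Q0 Q1 Rf pi psi - Vpsi d0 Q0 Q1 Rf pi_u psi
  = Delta Q0 Q1 psi * (Vpi d0 Rf pi - Vpi d0 Rf pi_u).
Proof.
move=> hA hR hpi.
by rewrite !Vpsi_affine //; [ring | exact: pi_u_policy].
Qed.

End PopulationValues.

Section ExcessValue.
Variable R : realFieldType.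

Lemma positive_signal (Vu V Dl : R) :
  0 <= Vu -> 0 <= V -> -1 <= Dl -> Vu < Dl * (V - Vu) -> 0 < Dl /\ Vu < V.
Proof.
move=> Vu0 V0 Dl_ge gain.
have Vgt : Vu < V.
  rewrite ltNge; apply/negP => VleVu.
  have flip : Dl * (V - Vu) = (- Dl) * (Vu - V) by ring.
  have : (- Dl) * (Vu - V) <= 1 * (Vu - V) by apply: ler_wpM2r; lra.
  lra.
by split => //; nra.
Qed.

(* Deterministic core of Lemma 2: Gh, Gs are the empirical objectives of the
   empirical maximiser and of (pi^star, psi^star), each within Ke of its
   population counterpart Dl * (V - Vu). *)
Lemma excess_value_bound (Vu Vh Vs Dh Ds Gh Gs Ke : R) :
  0 <= Vu -> 0 <= Vh -> -1 <= Dh -> Dh <= Ds ->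
  `|Gh - Dh * (Vh - Vu)| <= Ke -> `|Gs - Ds * (Vs - Vu)| <= Ke ->
  Gs <= Gh -> Vu + Ke < Gh ->
  Vs - 2 * Ke / Ds <= Vh.
Proof.
move=> Vu0 Vh0 Dh_ge DhleDs /ler_normlP[devh1 devh2] /ler_normlP[devs1 devs2].
move=> GsleGh Gh_big.
have hat_gain : Vu < Dh * (Vh - Vu) by lra.
have [Dh_pos VultVh] := positive_signal Vu0 Vh0 Dh_ge hat_gain.
have Ds_pos : 0 < Ds by lra.
have slope : Dh * (Vh - Vu) <= Ds * (Vh - Vu) by apply: ler_wpM2r; lra.
have gap : Ds * (Vs - Vh) <= 2 * Ke by nra.
have : Vs - Vh <= 2 * Ke / Ds by rewrite ler_pdivlMr //; nra.
lra.
Qed.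

End ExcessValue.

Theorem lemma2 (R : realType) (dX : measure_display) (X : measurableType dX)
  (A : finType) (dY : measure_display) (Y : measurableType dY)
  (d0 : probability X R) (Q0 Q1 : probability Y R) (Rf : X -> A -> R)
  (I J : finType) (Pi : I -> X -> A -> R) (Psi : J -> Y -> R)
  (D : seq (X * A * Y)) (eps : R)
  (istar ihat : I) (jstar jhat : J) :
  (0 < #|A|)%N ->
  (0 < size D)%N ->
  is_reward_fun Rf ->
  (forall i, is_policy (Pi i)) ->
  (forall j, is_decoder (Psi j)) ->
  (* pi^star maximizes V over Pi, psi^star maximizes Delta over Psi *)
  (forall i, Vpi d0 Rf (Pi i) <= Vpi d0 Rf (Pi istar)) ->
  (forall j, Delta Q0 Q1 (Psi j) <= Delta Q0 Q1 (Psi jstar)) ->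
  (* (pihat, psihat) maximizes the empirical objective over Pi x Psi *)
  (forall i j, Vhat D (Pi i) (Psi j) - Vhat_u D (Psi j)
               <= Vhat D (Pi ihat) (Psi jhat) - Vhat_u D (Psi jhat)) ->
  0 <= eps ->
  (* uniform deviation bound *)
  (forall i j,
     `| (Vhat D (Pi i) (Psi j) - Vhat_u D (Psi j))
        - (Vpsi d0 Q0 Q1 Rf (Pi i) (Psi j) - Vpsi d0 Q0 Q1 Rf pi_u (Psi j)) |
     <= Kr R A * eps) ->
  Vpi d0 Rf pi_u + Kr R A * eps
    < Vhat D (Pi ihat) (Psi jhat) - Vhat_u D (Psi jhat) ->
  Vpi d0 Rf (Pi istar) - 2 * Kr R A * eps / Delta Q0 Q1 (Psi jstar)
    <= Vpi d0 Rf (Pi ihat).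
Proof.
move=> hA _ hR hPi hPsi _ hDstar hhat _ hdev hcond.
have dev_hat := hdev ihat jhat; have dev_star := hdev istar jstar.
rewrite objective_factor // in dev_hat.
rewrite objective_factor // in dev_star.
have Vu0 : 0 <= Vpi d0 Rf pi_u by apply: Vpi_ge0 => //; exact: pi_u_policy.
have Vh0 : 0 <= Vpi d0 Rf (Pi ihat) by exact: Vpi_ge0.
have Dh_ge : -1 <= Delta Q0 Q1 (Psi jhat) by exact: Delta_ge_m1.
have := excess_value_bound Vu0 Vh0 Dh_ge (hDstar jhat) dev_hat dev_star
  (hhat istar jstar) hcond.
by rewrite mulrA.
Qed.
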